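(* Let $\Omega=[\alpha,\beta]$ with $\alpha<\beta$, and let $q_1,\dots,q_m\in(\alpha,\beta)$ be arbitrary points. Then $F=G_{q_m}G_{q_{m-1}}\cdots G_{q_1}0_\Omega$ is an $\Omega$-tropical polynomial all of whose non-smooth points have multiplicity at most $2$.
   Context: Let $\Omega=[\alpha,\beta]$ be a compact interval with $\alpha<\beta$. An $\Omega$-tropical series is a function $F:\Omega\to[0,\infty)$ with $F(\alpha)=F(\beta)=0$ that can be written as $F(z)=\inf_{v\in\mathbb{Z}}(a_v+zv)$ for some real numbers $a_v$; its canonical coefficients are $a_v=\sup_{z\in\Omega}(F(z)-zv)$. Such $F$ is concave piecewise linear with integer slopes; its non-smooth points are the points of $(\alpha,\beta)$ where $F$ is not differentiable, and the multiplicity of such a point $h$ is $F'(h^-)-F'(h^+)\in\mathbb{Z}_{\ge1}$. An $\Omega$-tropical polynomial is an $\Omega$-tropical series with finitely many non-smooth points. $0_\Omega$ is the zero function on $\Omega$. For $p\in(\alpha,\beta)$ the operator $G_p$ is defined as follows: if $F$ is not differentiable at $p$, then $G_pF=F$; otherwise there is a unique $w\in\mathbb{Z}$ with $F(z)=a_w+zw$ near $p$ ($a_v$ canonical coefficients of $F$), and $G_pF(z)=\inf_{v\in\mathbb{Z}}(b_v+zv)$ for $z\in\Omega$, where $b_v=a_v$ for $v\neq w$ and $b_w=\min_{v\in\mathbb{Z}\setminus\{w\}}(a_v+pv)-pw$. *)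

From HB Require Import structures.
From mathcomp Require Import all_boot all_order all_algebra.
From mathcomp Require Import all_classical all_reals all_analysis.
Set Implicit Arguments. Unset Strict Implicit. Unset Printing Implicit Defensive.
Import Order.TTheory GRing.Theory Num.Theory.
Import numFieldNormedType.Exports.
Local Open Scope classical_set_scope.
Local Open Scope ring_scope.

Section Tropical.
Variable R : realType.
Variables alpha beta : R.

Definition Omega : set R := [set z | z \in `[alpha, beta]].

Definition trop_vals (a : int -> R) (z : R) : set R :=
  [set a v + z * v%:~R | v in [set: int]].

(* Omega-tropical series: F : Omega -> [0,oo), F alpha = F beta = 0, and
   F z = inf_v (a_v + z v) on Omega for some real a_v (the infimum being a
   real number, i.e. the set is bounded below). Values off Omega are irrelevant. *)
Definition trop_series (F : R -> R) : Prop :=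
  [/\ (forall z, z \in `[alpha, beta] -> 0 <= F z),
      F alpha = 0, F beta = 0 &
      (exists a : int -> R, forall z, z \in `[alpha, beta] ->
        has_lbound (trop_vals a z) /\ F z = inf (trop_vals a z))].

Definition canon (F : R -> R) (v : int) : R :=
  sup [set F z - z * v%:~R | z in Omega].

Definition nonsmooth (F : R -> R) (h : R) : Prop :=
  (h \in `]alpha, beta[) /\ ~ derivable F h 1.

Definition left_deriv (F : R -> R) (h : R) : R :=
  lim ((fun t => (F (h + t) - F h) / t) @ 0^'-).
Definition right_deriv (F : R -> R) (h : R) : R :=
  lim ((fun t => (F (h + t) - F h) / t) @ 0^'+).

Definition multiplicity (F : R -> R) (h : R) : R :=
  left_deriv F h - right_deriv F h.

Definition trop_poly (F : R -> R) : Prop :=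
  trop_series F /\ finite_set (nonsmooth F).

Definition zeroOmega : R -> R := fun _ => 0.

(* If F is differentiable at p, the unique w with
   F z = a_w + z w near p is exactly the v satisfying the "near" test below;
   its coefficient is replaced by min_{u <> w}(a_u + p u) - p w. *)
Definition Gcoef (p : R) (F : R -> R) (v : int) : R :=
  if `[< \forall z \near p, F z = canon F v + z * v%:~R >]
  then inf [set canon F u + p * u%:~R | u in [set u | u != v]] - p * v%:~R
  else canon F v.

Definition G (p : R) (F : R -> R) : R -> R :=
  if `[< derivable F p 1 >] then (fun z => inf (trop_vals (Gcoef p F) z))
  else F.

End Tropical.

From Pilot Require Import Defs.
From HB Require Import structures.
From mathcomp Require Import all_boot all_order all_algebra.
From mathcomp Require Import all_classical all_reals all_analysis.
From mathcomp Require Import ring lra zify.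
Import Order.TTheory GRing.Theory Num.Theory.
Import numFieldNormedType.Exports.
Set Implicit Arguments. Unset Strict Implicit. Unset Printing Implicit Defensive.
Local Open Scope classical_set_scope.
Local Open Scope ring_scope.

(* Every function reachable from [0_Omega] is, on [Omega], of the form
   [F z = s (z - alpha) - \sum_(x <- X) (z - x)_+] for an integer [s] and a
   multiset [X] of points of [(alpha, beta)] in which no point occurs more
   than twice, with [F beta = 0].  The non-smooth points of such an [F] are
   the points of [X], and the jump of the slope at [h] is the multiplicity
   of [h] in [X].
   If [p] is in [X], then [G_p F = F].  Otherwise let [l < p < r] be the
   nearest points of [X] or endpoints of [Omega] around [p], let [w] be the
   slope of [F] on [[l, r]] and [d = min (p - l) (r - p)].  The canonical
   coefficients of [F] at [w + 1] and [w - 1] are those of the supporting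
   lines at [l] and [r], so lowering the slope-[w] piece to
   [min_(v != w) (a_v + p v)] gives [G_p F = F + T], where [T] is the tent
   with corners [l, l + d, r - d, r] and slopes [1, 0, -1].  Thus [G_p]
   removes one copy of [l] and of [r] from [X] and adds [l + d] and [r - d];
   these lie in [(l, r)], where [X] has no point, and they coincide (at [p])
   only if [d = p - l = r - p]. *)

Section PosPart.
Variable R : realDomainType.

Definition pos_part (x : R) : R := Num.max x 0.

Lemma pos_part_id x : 0 <= x -> pos_part x = x.
Proof. by move=> x_ge0; apply/max_idPl. Qed.

Lemma pos_part_eq0 x : x <= 0 -> pos_part x = 0.
Proof. by move=> x_le0; apply/max_idPr. Qed.

Lemma pos_part_ge x : x <= pos_part x.
Proof. by rewrite le_max lexx. Qed.

Lemma pos_part_ge0 x : 0 <= pos_part x.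
Proof. by rewrite le_max lexx orbT. Qed.

End PosPart.

Lemma count_lt_sub (T : eqType) (a b : pred T) (xs : seq T) y :
  subpred a b -> y \in xs -> b y -> ~~ a y -> (count a xs < count b xs)%N.
Proof.
move=> ab; elim: xs => //= x xs IH; rewrite inE => /orP[/eqP<-|y_xs] by_ ay.
- by rewrite (negbTE ay) by_ /=; have := sub_count ab xs; lia.
- have := IH y_xs by_ ay; case ax: (a x); first by rewrite (ab _ ax); lia.
  by case: (b x); lia.
Qed.

Lemma near_at_left_right (R : realFieldType) (P : R -> Prop) (a : R) :
  (\forall t \near a^'-, P t) -> (\forall t \near a^'+, P t) ->
  \forall t \near a^', P t.
Proof.
rewrite /at_left /at_right /dnbhs !near_withinE => hl hr.
apply: filterS2 hl hr => t hl hr /= ta.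
by case: (ltgtP t a) ta => [/hl|/hr|->] //; rewrite eqxx.
Qed.

Lemma derivable1E (R : realFieldType) (F : R -> R) (h : R) :
  derivable F h 1 = cvg ((fun t => (F (h + t) - F h) / t) @ 0^').
Proof.
rewrite /derivable; suff -> : (fun t : R => t^-1 *: ((F \o shift h) (t *: 1) - F h)) =
  (fun t => (F (h + t) - F h) / t) by [].
apply/funext => t /=.
by rewrite -[t%:A]/(t * 1) mulr1 (addrC t h) -[t^-1 *: _]/(t^-1 * _) mulrC.
Qed.

Lemma inf_attained (R : realType) (S : set R) x : S x -> lbound S x -> inf S = x.
Proof.
move=> Sx lbx; apply/le_anti; rewrite lb_le_inf //; last by exists x.
by rewrite andbT; apply: ge_inf => //; exists x.
Qed.

Section PiecewiseLinear.
Variables (R : realDomainType) (alpha : R).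
Implicit Types (s : int) (xs : seq R) (a : pred R) (x y z : R).

Definition pwl s xs z : R := s%:~R * (z - alpha) - \sum_(x <- xs) pos_part (z - x).

Definition slope_left s xs z : int := s - (count (fun x => x < z) xs)%:Z.
Definition slope_right s xs z : int := s - (count (fun x => x <= z) xs)%:Z.

Lemma slope_leftE s xs z : slope_left s xs z = slope_right s xs z + (count_mem z xs)%:Z.
Proof.
rewrite /slope_left /slope_right.
suff -> : count (fun x => x <= z) xs = addn (count (fun x => x < z) xs) (count_mem z xs).
  by lia.
by elim: xs => //= x xs ->; case: ltgtP => /= _; lia.
Qed.

Lemma pwl_le_support s xs a y z :
  (forall x, a x -> x <= z) -> (forall x, ~~ a x -> z <= x) ->
  pwl s xs y <= pwl s xs z + (y - z) * (s - (count a xs)%:Z)%:~R.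
Proof.
move=> left_z right_z.
have : (count a xs)%:R * (y - z) <=
       \sum_(x <- xs) pos_part (y - x) - \sum_(x <- xs) pos_part (z - x).
  elim: xs => [|x xs IH]; first by rewrite !big_nil mul0r subrr.
  rewrite !big_cons /= natrD mulrDl.
  suff : (a x)%:R * (y - z) <= pos_part (y - x) - pos_part (z - x) by lra.
  case ax: (a x).
  - rewrite (@pos_part_id _ (z - x)) ?subr_ge0 ?left_z //.
    by have := pos_part_ge (y - x); rewrite mul1r; lra.
  - rewrite (@pos_part_eq0 _ (z - x)) ?subr_le0 ?right_z ?ax //.
    by rewrite mul0r subr0 pos_part_ge0.
by rewrite /pwl intrB -pmulrn; nra.
Qed.

Lemma pwl_le_slope_left s xs y z :
  pwl s xs y <= pwl s xs z + (y - z) * (slope_left s xs z)%:~R.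
Proof. by apply: pwl_le_support => x; [apply: ltW | rewrite -leNgt]. Qed.

Lemma pwl_le_slope_right s xs y z :
  pwl s xs y <= pwl s xs z + (y - z) * (slope_right s xs z)%:~R.
Proof. by apply: pwl_le_support => x //; rewrite -ltNge => /ltW. Qed.

Lemma pwl_affine s xs a z p :
  (forall x, x \in xs ->
     (a x /\ x <= z /\ x <= p) \/ (~~ a x /\ z <= x /\ p <= x)) ->
  pwl s xs z = pwl s xs p + (z - p) * (s - (count a xs)%:Z)%:~R.
Proof.
move=> sep; rewrite /pwl; suff -> : \sum_(x <- xs) pos_part (z - x) =
    \sum_(x <- xs) pos_part (p - x) + (count a xs)%:R * (z - p).
  by rewrite intrB -pmulrn; ring.
elim: xs sep => [|x xs IH] sep; first by rewrite !big_nil mul0r addr0.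
rewrite !big_cons /= IH => [|y y_xs]; last by apply: sep; rewrite inE y_xs orbT.
have [[ax [xz xp]]|[ax [zx px]]] := sep x (mem_head _ _).
- by rewrite ax !pos_part_id ?subr_ge0 // natrD /=; ring.
- by rewrite (negbTE ax) !pos_part_eq0 ?subr_le0 // add0n /=; ring.
Qed.

End PiecewiseLinear.

Section Neighbours.
Variables (R : realDomainType) (alpha beta : R).

Lemma neighbours (xs : seq R) (p : R) :
  alpha < p < beta -> (forall x, x \in xs -> alpha < x < beta) ->
  exists l r, [/\ alpha <= l < p, p < r <= beta,
    l = alpha \/ l \in xs, r = beta \/ r \in xs &
    forall x, x \in xs -> [\/ x <= l, x = p | r <= x]].
Proof.
move=> /andP[ap pb]; elim: xs => [|y ys IH] xs_in.
  by exists alpha, beta; split; rewrite ?lexx ?ap ?pb //; left.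
have [|l [r [/andP[al lp] /andP[pr rb] hl hr ys_out]]] := IH.
  by move=> x x_ys; apply: xs_in; rewrite inE x_ys orbT.
have /andP[ay yb] : alpha < y < beta by apply: xs_in; rewrite inE eqxx.
have cons_in c (t : R) : t = c \/ t \in ys -> t = c \/ t \in y :: ys.
  by case=> [->|t_ys]; [left | right; rewrite inE t_ys orbT].
have [yp|py|yp] := ltgtP y p.
- have [ly|yl] := leP l y.
  + exists y, r; split; rewrite ?(ltW ay) ?yp ?pr ?rb //; try exact: cons_in;
      first by right; rewrite mem_head.
    move=> x; rewrite inE => /orP[/eqP->|/ys_out [xl|->|rx]]; first exact: Or31.
    * by apply: Or31; apply: le_trans ly.
    * exact: Or32.
    * exact: Or33.
  + exists l, r; split; rewrite ?al ?lp ?pr ?rb //; try exact: cons_in.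
    by move=> x; rewrite inE => /orP[/eqP->|/ys_out //]; apply: Or31; apply: ltW.
- have [yr|ry] := leP y r.
  + exists l, y; split; rewrite ?(ltW yb) ?al ?lp ?py //; try exact: cons_in;
      first by right; rewrite mem_head.
    move=> x; rewrite inE => /orP[/eqP->|/ys_out [xl|->|rx]]; first exact: Or33.
    * exact: Or31.
    * exact: Or32.
    * by apply: Or33; apply: le_trans rx.
  + exists l, r; split; rewrite ?al ?lp ?pr ?rb //; try exact: cons_in.
    by move=> x; rewrite inE => /orP[/eqP->|/ys_out //]; apply: Or33; apply: ltW.
- exists l, r; split; rewrite ?al ?lp ?pr ?rb //; try exact: cons_in.
  by move=> x; rewrite inE => /orP[/eqP->|/ys_out //]; apply: Or32 yp.
Qed.

End Neighbours.

Section PwlRepresentation.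
Variables (R : realType) (alpha beta : R) (s : int) (xs : seq R) (F : R -> R).
Hypothesis alpha_lt_beta : alpha < beta.
Hypothesis F_pwl : forall z, alpha <= z <= beta -> F z = pwl alpha s xs z.
Hypothesis xs_in : forall x, x \in xs -> alpha < x < beta.

Lemma pwl_local_affine h : alpha < h < beta ->
  exists l r, [/\ alpha <= l < h, h < r <= beta,
    forall z, l <= z <= h -> F z = F h + (z - h) * (slope_left s xs h)%:~R &
    forall z, h <= z <= r -> F z = F h + (z - h) * (slope_right s xs h)%:~R].
Proof.
move=> h_in; have /andP[ah hb] := h_in.
have [l [r [/andP[al lh] /andP[hr rb] _ _ xs_out]]] := neighbours h_in xs_in.
have Fh : F h = pwl alpha s xs h by rewrite F_pwl ?(ltW ah) ?(ltW hb).
exists l, r; split; rewrite ?al ?lh ?hr ?rb // => z /andP[z1 z2]; rewrite Fh F_pwl;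
  try (apply/andP; split; lra); apply: pwl_affine => x /xs_out [xl|->|rx].
- by left; split; [|split]; lra.
- by right; split; [rewrite ltxx | split].
- by right; split; [rewrite -leNgt | split]; lra.
- by left; split; [|split]; lra.
- by left; split.
- by right; split; [rewrite -ltNge | split]; lra.
Qed.

Lemma pwl_right_quotient h : alpha < h < beta ->
  \forall t \near 0^'+, (F (h + t) - F h) / t = (slope_right s xs h)%:~R.
Proof.
move=> h_in; have [l [r [_ /andP[hr _] _ Fr]]] := pwl_local_affine h_in.
near=> t.
have t_gt0 : 0 < t by near: t; exact: nbhs_right_gt.
have t_lt : t < r - h by near: t; apply: nbhs_right_lt; rewrite subr_gt0.
rewrite Fr; last by apply/andP; split; lra.
have -> : F h + (h + t - h) * (slope_right s xs h)%:~R - F h = (slope_right s xs h)%:~R * t.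
  by ring.
by rewrite mulfK // gt_eqF.
Unshelve. all: by end_near.
Qed.

Lemma pwl_left_quotient h : alpha < h < beta ->
  \forall t \near 0^'-, (F (h + t) - F h) / t = (slope_left s xs h)%:~R.
Proof.
move=> h_in; have [l [r [/andP[_ lh] _ Fl _]]] := pwl_local_affine h_in.
near=> t.
have t_lt0 : t < 0 by near: t; exact: nbhs_left_lt.
have t_gt : l - h < t by near: t; apply: nbhs_left_gt; rewrite subr_lt0.
rewrite Fl; last by apply/andP; split; lra.
have -> : F h + (h + t - h) * (slope_left s xs h)%:~R - F h = (slope_left s xs h)%:~R * t.
  by ring.
by rewrite mulfK // lt_eqF.
Unshelve. all: by end_near.
Qed.

Lemma pwl_left_deriv h : alpha < h < beta -> left_deriv F h = (slope_left s xs h)%:~R.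
Proof.
by move=> h_in; apply: lim_near_cst; [exact: norm_hausdorff | exact: pwl_left_quotient].
Qed.

Lemma pwl_right_deriv h : alpha < h < beta -> right_deriv F h = (slope_right s xs h)%:~R.
Proof.
by move=> h_in; apply: lim_near_cst; [exact: norm_hausdorff | exact: pwl_right_quotient].
Qed.

Lemma pwl_multiplicity h : alpha < h < beta -> multiplicity F h = (count_mem h xs)%:R.
Proof.
move=> h_in; rewrite /multiplicity pwl_left_deriv // pwl_right_deriv //.
by rewrite slope_leftE intrD addrC addKr.
Qed.

Lemma pwl_derivable h : alpha < h < beta -> h \notin xs -> derivable F h 1.
Proof.
move=> h_in h_xs; rewrite derivable1E; apply/cvg_ex; exists (slope_right s xs h)%:~R.
apply: cvg_near_cst; apply: near_at_left_right; last exact: pwl_right_quotient.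
have <- : slope_left s xs h = slope_right s xs h.
  by rewrite slope_leftE (count_memPn h_xs) addr0.
exact: pwl_left_quotient.
Qed.

Lemma pwl_not_derivable h : alpha < h < beta -> h \in xs -> ~ derivable F h 1.
Proof.
move=> h_in h_xs; rewrite derivable1E => /cvg_ex [c Fc].
have left_c : left_deriv F h = c.
  by apply: cvg_lim; [exact: norm_hausdorff | exact: cvg_dnbhs_at_left Fc].
have right_c : right_deriv F h = c.
  by apply: cvg_lim; [exact: norm_hausdorff | exact: cvg_dnbhs_at_right Fc].
have : (slope_left s xs h)%:~R = (slope_right s xs h)%:~R :> R.
  by rewrite -pwl_left_deriv // -pwl_right_deriv // left_c right_c.
move/intr_inj/eqP; rewrite slope_leftE -[X in _ == X]addr0 (inj_eq (addrI _)) eqz_nat.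
by apply/negP; rewrite -lt0n -has_count has_pred1.
Qed.

Lemma pwl_at_alpha : F alpha = 0.
Proof.
rewrite F_pwl ?lexx ?(ltW alpha_lt_beta) // /pwl subrr mulr0 sub0r big1_seq ?oppr0 //.
by move=> x /andP[_ /xs_in /andP[ax _]]; rewrite pos_part_eq0 // subr_le0 ltW.
Qed.

Lemma pwl_le_tangent_left y z : alpha <= y <= beta -> alpha <= z <= beta ->
  F y <= F z + (y - z) * (slope_left s xs z)%:~R.
Proof. by move=> y_in z_in; rewrite !F_pwl //; apply: pwl_le_slope_left. Qed.

Lemma pwl_le_tangent_right y z : alpha <= y <= beta -> alpha <= z <= beta ->
  F y <= F z + (y - z) * (slope_right s xs z)%:~R.
Proof. by move=> y_in z_in; rewrite !F_pwl //; apply: pwl_le_slope_right. Qed.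

Lemma pwl_canon_ubound v : has_ubound [set F z - z * v%:~R | z in Omega alpha beta].
Proof.
set c : R := (slope_left s xs alpha)%:~R.
exists (Num.max (- alpha * v%:~R) ((beta - alpha) * c - beta * v%:~R)).
move=> _ [y + <-]; rewrite /Omega /= in_itv /= => y_in; have /andP[ay yb] := y_in.
have := @pwl_le_tangent_left y alpha y_in; rewrite lexx ltW // pwl_at_alpha add0r => /(_ isT).
rewrite le_max; have [cv|cv] := lerP 0 (c - v%:~R) => Fy; apply/orP.
- right; have : 0 <= (beta - y) * (c - v%:~R) by rewrite mulr_ge0 // subr_ge0.
  nra.
- left; have : 0 <= (y - alpha) * (v%:~R - c) by rewrite mulr_ge0 ?subr_ge0 //; lra.
  nra.
Qed.

Lemma pwl_le_canon v y : alpha <= y <= beta -> F y - y * v%:~R <= Defs.canon alpha beta F v.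
Proof.
move=> y_in; apply: ub_le_sup; first exact: pwl_canon_ubound.
by exists y => //; rewrite /Omega /= in_itv.
Qed.

Lemma pwl_canonE v z : alpha <= z <= beta ->
  (forall y, alpha <= y <= beta -> F y <= F z + (y - z) * v%:~R) ->
  Defs.canon alpha beta F v = F z - z * v%:~R.
Proof.
move=> z_in tangent; apply/le_anti; rewrite pwl_le_canon // andbT.
apply: ge_sup; first by exists (F z - z * v%:~R), z => //; rewrite /Omega /= in_itv.
by move=> _ [y + <-]; rewrite /Omega /= in_itv /= => y_in; have := tangent y y_in; lra.
Qed.

Lemma pwl_trop_series : F beta = 0 -> trop_series alpha beta F.
Proof.
move=> F_beta; have a_in : alpha <= alpha <= beta by rewrite lexx ltW.
have b_in : alpha <= beta <= beta by rewrite lexx ltW.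
split=> [z | | // | ].
- rewrite in_itv /= => z_in; have /andP[az zb] := z_in.
  have := pwl_le_tangent_left a_in z_in; have := pwl_le_tangent_left b_in z_in.
  rewrite pwl_at_alpha F_beta.
  have [c_ge0|c_lt0] := lerP 0 ((slope_left s xs z)%:~R : R).
  + have : 0 <= (z - alpha) * (slope_left s xs z)%:~R by rewrite mulr_ge0 // subr_ge0.
    lra.
  + have : (beta - z) * (slope_left s xs z)%:~R <= 0 by rewrite mulr_ge0_le0 ?subr_ge0 // ltW.
    lra.
- exact: pwl_at_alpha.
- exists (Defs.canon alpha beta F) => z; rewrite in_itv /= => z_in.
  have lb : lbound (trop_vals (Defs.canon alpha beta F) z) (F z).
    by move=> _ [v _ <-]; have := pwl_le_canon v z_in; lra.
  split; first by exists (F z).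
  apply/esym/inf_attained => //; exists (slope_left s xs z) => //.
  rewrite (pwl_canonE z_in); first by ring.
  by move=> y y_in; apply: pwl_le_tangent_left.
Qed.

Lemma pwl_nonsmooth_sub : nonsmooth alpha beta F `<=` [set` xs].
Proof.
move=> h [h_in h_nd] /=; apply/negPn/negP => h_xs; apply: h_nd.
by apply: pwl_derivable; rewrite // in_itv /= in h_in.
Qed.

End PwlRepresentation.

(* [lra] ignores section hypotheses; they are put in the goal with [have :=]. *)
Section Tent.
Variables (R : realDomainType) (l r d : R).
Hypotheses (d_gt0 : 0 < d) (l_le_r : l + d <= r - d).

Definition tent (z : R) : R :=
  pos_part (z - l) - pos_part (z - (l + d)) - pos_part (z - (r - d)) + pos_part (z - r).

Lemma tent_out z : z <= l \/ r <= z -> tent z = 0.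
Proof.
have := d_gt0; have := l_le_r; rewrite /tent => ? ? -[zl|rz].
- by rewrite !pos_part_eq0; lra.
- by rewrite !pos_part_id; lra.
Qed.

Lemma tent_rise z : l <= z <= l + d -> tent z = z - l.
Proof.
have := d_gt0; have := l_le_r; rewrite /tent => ? ? /andP[z1 z2].
by rewrite (@pos_part_id _ (z - l)) ?pos_part_eq0; lra.
Qed.

Lemma tent_flat z : l + d <= z <= r - d -> tent z = d.
Proof.
have := d_gt0; have := l_le_r; rewrite /tent => ? ? /andP[z1 z2].
by rewrite (@pos_part_id _ (z - l)) ?(@pos_part_id _ (z - (l + d))) ?pos_part_eq0; lra.
Qed.

Lemma tent_fall z : r - d <= z <= r -> tent z = r - z.
Proof.
have := d_gt0; have := l_le_r; rewrite /tent => ? ? /andP[z1 z2].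
by rewrite (@pos_part_eq0 _ (z - r)) ?pos_part_id; lra.
Qed.

Lemma tent_le_between z : l <= z <= r ->
  [/\ tent z <= z - l, tent z <= r - z & tent z <= d].
Proof.
have := d_gt0; have := l_le_r => ? ? /andP[lz zr].
have [z1|z1] := leP z (l + d); first by rewrite tent_rise ?lz //; split; lra.
have [z2|z2] := leP (r - d) z; first by rewrite tent_fall ?z2 //; split; lra.
by rewrite tent_flat; [split; lra | apply/andP; split; lra].
Qed.

Lemma tent_le z : tent z <= d.
Proof.
have [/tent_le_between[] //|] := boolP (l <= z <= r).
rewrite negb_and -!ltNge => z_out; rewrite tent_out ?(ltW d_gt0) //.
by case/orP: z_out => /ltW; [left | right].
Qed.

End Tent.

Definition mult2_rep (R : realType) (alpha beta : R) (F : R -> R) : Prop :=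
  exists (s : int) (xs : seq R),
  [/\ forall x, x \in xs -> alpha < x < beta, forall y, (count_mem y xs <= 2)%N,
      forall z, alpha <= z <= beta -> F z = pwl alpha s xs z & pwl alpha s xs beta = 0].

Section GStep.
Variables (R : realType) (alpha beta : R) (s : int) (xs : seq R) (F : R -> R) (p l r : R).
Hypothesis alpha_lt_beta : alpha < beta.
Hypothesis F_pwl : forall z, alpha <= z <= beta -> F z = pwl alpha s xs z.
Hypothesis xs_in : forall x, x \in xs -> alpha < x < beta.
Hypothesis p_xs : p \notin xs.
Hypotheses (al : alpha <= l) (lp : l < p) (pr : p < r) (rb : r <= beta).
Hypotheses (l_xs : l = alpha \/ l \in xs) (r_xs : r = beta \/ r \in xs).
Hypothesis xs_out : forall x, x \in xs -> x <= l \/ r <= x.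

Let w := slope_left s xs p.
Let d := Num.min (p - l) (r - p).

Lemma step_d : [/\ 0 < d, d <= p - l, d <= r - p & d = p - l \/ d = r - p].
Proof.
rewrite /d; split.
- by rewrite lt_min !subr_gt0 lp pr.
- by rewrite ge_min lexx.
- by rewrite ge_min lexx orbT.
- by case: leP => _; [left | right].
Qed.

Lemma step_tent_d : l + d <= r - d.
Proof. by have [] := step_d; lra. Qed.

Lemma step_p_in : alpha <= p <= beta.
Proof. by rewrite (ltW (le_lt_trans al lp)) (ltW (lt_le_trans pr rb)). Qed.

Lemma step_l_in : alpha <= l <= beta.
Proof. by rewrite al (ltW (lt_le_trans (lt_trans lp pr) rb)). Qed.

Lemma step_r_in : alpha <= r <= beta.
Proof. by rewrite rb (ltW (le_lt_trans al (lt_trans lp pr))). Qed.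

Lemma step_affine z : l <= z <= r -> F z = F p + (z - p) * w%:~R.
Proof.
move=> /andP[lz zr]; have := lp; have := pr => ? ?.
rewrite F_pwl ?(le_trans al lz) ?(le_trans zr rb) // F_pwl ?step_p_in //.
apply: pwl_affine => x /xs_out [xl|rx].
- by left; split; [|split]; lra.
- by right; split; [rewrite -leNgt | split]; lra.
Qed.

Lemma step_affine_l : F l = F p + (l - p) * w%:~R.
Proof. by apply: step_affine; rewrite lexx ltW // (lt_trans lp pr). Qed.

Lemma step_affine_r : F r = F p + (r - p) * w%:~R.
Proof. by apply: step_affine; rewrite lexx ltW // (lt_trans lp pr). Qed.

Lemma step_slope_right_p : slope_right s xs p = w.
Proof. by rewrite /w slope_leftE (count_memPn p_xs) addr0. Qed.

Lemma step_slope_right_l : slope_right s xs l = w.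
Proof.
rewrite /slope_right /w /slope_left; congr (_ - _%:Z); apply: eq_in_count => x x_xs /=.
apply/idP/idP => [xl|xp]; first exact: le_lt_trans xl lp.
by case: (xs_out x_xs) => // rx; move: (lt_le_trans pr rx); rewrite ltNge ltW.
Qed.

Lemma step_slope_left_r : slope_left s xs r = w.
Proof.
rewrite -step_slope_right_p /slope_left /slope_right; congr (_ - _%:Z).
apply: eq_in_count => x x_xs /=; apply/idP/idP => [xr|xp]; last exact: le_lt_trans xp pr.
case: (xs_out x_xs) => [xl|rx]; first exact: ltW (le_lt_trans xl lp).
by move: (lt_le_trans xr rx); rewrite ltxx.
Qed.

Lemma step_slope_left_l : l \in xs -> (w + 1 <= slope_left s xs l)%R.
Proof.
move=> l_in; rewrite /w /slope_left.
have := count_lt_sub (fun x xl => lt_trans xl lp) l_in lp (negbT (ltxx l)).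
by set m := count _ xs; set n := count _ xs; move: m n => m n; lia.
Qed.

Lemma step_slope_right_r : r \in xs -> (slope_right s xs r <= w - 1)%R.
Proof.
move=> r_in; rewrite -step_slope_right_p /slope_right.
have := count_lt_sub (fun x xp => le_trans xp (ltW pr)) r_in (lexx r) (negbT (lt_geF pr)).
by set m := count _ xs; set n := count _ xs; move: m n => m n; lia.
Qed.

Let tangent_left := pwl_le_tangent_left F_pwl.
Let tangent_right := pwl_le_tangent_right F_pwl.

Lemma step_tangent_l y : alpha <= y <= beta -> F y <= F l + (y - l) * (w + 1)%:~R.
Proof.
move=> y_in; have [ly|yl] := leP l y.
- have := tangent_right y_in step_l_in; rewrite step_slope_right_l [(w + 1)%:~R]intrD.
  have : 0 <= y - l by rewrite subr_ge0.
  nra.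
- have l_in : l \in xs.
    by case: l_xs => // la; have /andP[ay _] := y_in; move: (le_lt_trans ay yl); rewrite la ltxx.
  have := tangent_left y_in step_l_in; have := step_slope_left_l l_in; rewrite -(ler_int R).
  have : y - l <= 0 by rewrite subr_le0 ltW.
  nra.
Qed.

Lemma step_tangent_r y : alpha <= y <= beta -> F y <= F r + (y - r) * (w - 1)%:~R.
Proof.
move=> y_in; have [yr|ry] := leP y r.
- have := tangent_left y_in step_r_in; rewrite step_slope_left_r [(w - 1)%:~R]intrB.
  have : y - r <= 0 by rewrite subr_le0.
  nra.
- have r_in : r \in xs.
    by case: r_xs => // rb'; have /andP[_ yb] := y_in; move: (lt_le_trans ry yb); rewrite rb' ltxx.
  have := tangent_right y_in step_r_in; have := step_slope_right_r r_in; rewrite -(ler_int R).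
  have : 0 <= y - r by rewrite subr_ge0 ltW.
  nra.
Qed.

Local Notation canonF := (Defs.canon alpha beta F).
Let canonE := pwl_canonE alpha_lt_beta F_pwl xs_in.

Lemma step_canon_succ : canonF (w + 1) = F l - l * (w + 1)%:~R.
Proof. exact: canonE step_l_in step_tangent_l. Qed.

Lemma step_canon_pred : canonF (w - 1) = F r - r * (w - 1)%:~R.
Proof. exact: canonE step_r_in step_tangent_r. Qed.

Lemma step_canon : canonF w = F p - p * w%:~R.
Proof. by apply: canonE step_p_in _ => y y_in; exact: tangent_left y_in step_p_in. Qed.

(* Off [[l, r]] the tent vanishes; on it, the lines of slope [v >= w + 1] and
   [v <= w - 1] dominate the tangents at [l] and [r], which dominate [F + tent]. *)
Lemma step_canon_lb v z : v != w -> alpha <= z <= beta ->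
  F z + tent l r d z <= canonF v + z * v%:~R.
Proof.
move=> vw z_in; have le_canon := pwl_le_canon alpha_lt_beta F_pwl xs_in.
have [d_gt0 _ _ _] := step_d; have tent_d := step_tent_d.
have [lzr|] := boolP (l <= z <= r); last first.
  rewrite negb_and -!ltNge => z_out; rewrite tent_out ?(ltW d_gt0) //; last first.
    by case/orP: z_out => /ltW; [left | right].
  by have := le_canon v _ z_in; lra.
have /andP[lz zr] := lzr; have [tl tr _] := tent_le_between d_gt0 tent_d lzr.
have Fl := step_affine_l.
have Fr := step_affine_r.
have Fz := step_affine lzr.
move: vw; rewrite neq_lt => /orP[v_lt | w_lt].
- have v_le : v%:~R <= w%:~R - 1 :> R.
    by rewrite -[1]/(1%:~R) -intrB ler_int -ltzD1 subrK.
  have : 0 <= (r - z) * (w%:~R - 1 - v%:~R) by rewrite mulr_ge0 ?subr_ge0.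
  by have := le_canon v _ step_r_in; lra.
- have v_ge : w%:~R + 1 <= v%:~R :> R.
    by rewrite -[1]/(1%:~R) -intrD ler_int lezD1.
  have : 0 <= (z - l) * (v%:~R - w%:~R - 1) by rewrite mulr_ge0 ?subr_ge0 // lerBrDr addrC.
  by have := le_canon v _ step_l_in; lra.
Qed.

Let lowered := inf [set canonF u + p * u%:~R | u in [set u | u != w]].

Lemma step_lowered : lowered = F p + d.
Proof.
have [d_gt0 dl dr d_eq] := step_d.
have Fl := step_affine_l.
have Fr := step_affine_r.
have tent_p : tent l r d p = d.
  by apply: tent_flat => //; first exact: step_tent_d; apply/andP; split; lra.
have lb : lbound [set canonF u + p * u%:~R | u in [set u | u != w]] (F p + d).
  by move=> _ [u /= uw <-]; rewrite -tent_p; exact: step_canon_lb uw step_p_in.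
have w_succ : w + 1 != w by rewrite gt_eqF // ltrDl.
have w_pred : w - 1 != w by rewrite lt_eqF // gtrDl oppr_lt0.
apply/le_anti/andP; split; last first.
  by apply: lb_le_inf lb; exists (canonF (w + 1) + p * (w + 1)%:~R), (w + 1).
have succ_ge : lowered <= canonF (w + 1) + p * (w + 1)%:~R.
  by apply: ge_inf; [exists (F p + d) | exists (w + 1)].
have pred_ge : lowered <= canonF (w - 1) + p * (w - 1)%:~R.
  by apply: ge_inf; [exists (F p + d) | exists (w - 1)].
rewrite step_canon_succ intrD in succ_ge; rewrite step_canon_pred intrB in pred_ge.
by case: d_eq => ->; lra.
Qed.

Lemma step_near_lr : \forall z \near p, l < z < r.
Proof.
have := @near_in_itvoo R l r p; rewrite in_itv /= lp pr => /(_ isT).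
by apply: filterS => z; rewrite in_itv.
Qed.

Lemma step_near_canon v :
  `[< \forall z \near p, F z = canonF v + z * v%:~R >] = (v == w).
Proof.
have [->|vw] := eqVneq v w.
  apply/asboolP; apply: filterS step_near_lr => z /andP[lz zr].
  by rewrite step_affine ?(ltW lz) ?(ltW zr) // step_canon; ring.
apply: asboolF => F_line.
have near_eq : \forall z \near p, canonF v + z * v%:~R = F p + (z - p) * w%:~R.
  apply: filterS2 F_line step_near_lr => z <- /andP[lz zr].
  by rewrite step_affine ?(ltW lz) ?(ltW zr).
have right_eq : \forall z \near p^'+, canonF v + z * v%:~R = F p + (z - p) * w%:~R.
  by rewrite /at_right near_withinE; apply: filterS near_eq.
have same_line : \forall z \near p^'+, canonF v + z * v%:~R = F p + (z - p) * w%:~R /\ p < z.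
  by apply: filterS2 right_eq (nbhs_right_gt p) => z.
have [z [Fz pz]] := filter_ex same_line.
have Fp := nbhs_singleton near_eq; rewrite /= in Fp.
have : (z - p) * (v%:~R - w%:~R) = 0 by lra.
move/eqP; rewrite mulf_eq0 !subr_eq0 => /orP[/eqP zp | /eqP/intr_inj vw'].
- by move: pz; rewrite zp ltxx.
- by move: vw; rewrite vw' eqxx.
Qed.

Lemma step_Gcoef_neq v : v != w -> Gcoef alpha beta p F v = canonF v.
Proof. by move=> vw; rewrite /Gcoef step_near_canon (negbTE vw). Qed.

Lemma step_Gcoef_w : Gcoef alpha beta p F w = F p + d - p * w%:~R.
Proof. by rewrite /Gcoef step_near_canon eqxx -/lowered step_lowered. Qed.

Lemma step_Gcoef_lb v z : alpha <= z <= beta ->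
  F z + tent l r d z <= Gcoef alpha beta p F v + z * v%:~R.
Proof.
move=> z_in; have [->|vw] := eqVneq v w; last by rewrite step_Gcoef_neq //; exact: step_canon_lb.
have [d_gt0 _ _ _] := step_d.
have := tent_le d_gt0 step_tent_d z; have := tangent_left z_in step_p_in.
by rewrite step_Gcoef_w; lra.
Qed.

Lemma step_slope_left_neq z : alpha <= z < l -> slope_left s xs z != w.
Proof.
move=> /andP[az zl]; have l_in : l \in xs.
  by case: l_xs => // la; move: (le_lt_trans az zl); rewrite la ltxx.
rewrite /w /slope_left (inj_eq (addrI _)) eqr_opp eqz_nat neq_ltn; apply/orP; left.
apply: leq_ltn_trans (sub_count (fun x xz => lt_trans xz zl) xs) _.
exact: count_lt_sub (fun x xl => lt_trans xl lp) l_in lp (negbT (ltxx l)).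
Qed.

Lemma step_slope_right_neq z : r < z <= beta -> slope_right s xs z != w.
Proof.
move=> /andP[rz zb]; have r_in : r \in xs.
  by case: r_xs => // rb'; move: (lt_le_trans rz zb); rewrite rb' ltxx.
rewrite -step_slope_right_p /slope_right (inj_eq (addrI _)) eqr_opp eqz_nat neq_ltn.
apply/orP; right; apply: leq_trans (sub_count (fun x xr => le_trans xr (ltW rz)) xs).
exact: count_lt_sub (fun x xp => le_trans xp (ltW pr)) r_in (lexx r) (negbT (lt_geF pr)).
Qed.

Lemma step_Gcoef_attained z : alpha <= z <= beta ->
  exists v, Gcoef alpha beta p F v + z * v%:~R <= F z + tent l r d z.
Proof.
move=> z_in; have /andP[az zb] := z_in.
have [d_gt0 dl dr _] := step_d; have tent_d := step_tent_d.
have Fl := step_affine_l; have Fr := step_affine_r.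
have [zl|lz] := ltP z l.
  have vw := step_slope_left_neq (introT andP (conj az zl)).
  exists (slope_left s xs z); rewrite step_Gcoef_neq // (canonE z_in); last first.
    by move=> y y_in; apply: tangent_left.
  by rewrite tent_out ?(ltW d_gt0) //; [lra | left; apply: ltW].
have [rz|zr] := ltP r z.
  have vw := step_slope_right_neq (introT andP (conj rz zb)).
  exists (slope_right s xs z); rewrite step_Gcoef_neq // (canonE z_in); last first.
    by move=> y y_in; apply: tangent_right.
  by rewrite tent_out ?(ltW d_gt0) //; [lra | right; apply: ltW].
have Fz : F z = F p + (z - p) * w%:~R by apply: step_affine; rewrite lz zr.
have [z1|z1] := leP z (l + d).
  have w_succ : w + 1 != w by rewrite gt_eqF // ltrDl.
  exists (w + 1); rewrite step_Gcoef_neq // step_canon_succ tent_rise ?lz //.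
  by rewrite intrD; lra.
have [z2|z2] := leP z (r - d).
  exists w; rewrite step_Gcoef_w tent_flat //; first lra.
  by apply/andP; split; lra.
have w_pred : w - 1 != w by rewrite lt_eqF // gtrDl oppr_lt0.
exists (w - 1); rewrite step_Gcoef_neq // step_canon_pred tent_fall ?zr //; last lra.
by rewrite intrB; lra.
Qed.

Lemma step_G z : alpha <= z <= beta -> G alpha beta p F z = F z + tent l r d z.
Proof.
move=> z_in; have p_in : alpha < p < beta.
  by rewrite (le_lt_trans al lp) (lt_le_trans pr rb).
rewrite /G (asboolT (pwl_derivable F_pwl xs_in p_in p_xs)).
have [v v_le] := step_Gcoef_attained z_in.
apply: inf_attained; last by move=> _ [u _ <-]; exact: step_Gcoef_lb.
by exists v => //; apply/le_anti; rewrite v_le step_Gcoef_lb.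
Qed.

Let s' := if l == alpha then s + 1 else s.
Let xs_l := if l == alpha then xs else rem l xs.
Let xs_lr := if r == beta then xs_l else rem r xs_l.
Let xs' := l + d :: r - d :: xs_lr.

Lemma step_pwl z : alpha <= z <= beta -> pwl alpha s' xs' z = pwl alpha s xs z + tent l r d z.
Proof.
move=> /andP[az zb].
have sum_l : s'%:~R * (z - alpha) - \sum_(x <- xs_l) pos_part (z - x) =
    pwl alpha s xs z + pos_part (z - l).
  rewrite /pwl /s' /xs_l; case: eqP => [la | /eqP la].
    by rewrite la pos_part_id ?subr_ge0 // intrD; ring.
  by rewrite [in RHS](big_rem l) /=; [ring | case: l_xs => // /eqP; rewrite (negbTE la)].
have sum_r : \sum_(x <- xs_lr) pos_part (z - x) = \sum_(x <- xs_l) pos_part (z - x) - pos_part (z - r).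
  rewrite /xs_lr; case: eqP => [-> | /eqP rb'].
    by rewrite pos_part_eq0 ?subr_le0 // subr0.
  rewrite [in RHS](big_rem r) /=; first ring.
  have r_in : r \in xs by case: r_xs => // /eqP; rewrite (negbTE rb').
  rewrite /xs_l; case: ifP => // _; apply: rem_mem r_in.
  by rewrite gt_eqF // (lt_trans lp pr).
move: sum_l; rewrite /pwl /xs' !big_cons sum_r /tent; lra.
Qed.

Lemma step_xs'_sub : {subset xs_lr <= xs}.
Proof.
move=> x; rewrite /xs_lr /xs_l.
have rem_sub (y : R) (b : bool) t : x \in (if b then t else rem y t) -> x \in t.
  by case: b => // /mem_rem.
by move=> /rem_sub /rem_sub.
Qed.

Lemma step_xs'_in x : x \in xs' -> alpha < x < beta.
Proof.
have [d_gt0 dl dr _] := step_d; have := al; have := lp; have := pr; have := rb => ? ? ? ?.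
rewrite /xs' !inE => /orP[/eqP-> | /orP[/eqP-> | /step_xs'_sub/xs_in //]].
all: by apply/andP; split; lra.
Qed.

Lemma step_xs'_count : (forall y, (count_mem y xs <= 2)%N) -> forall y, (count_mem y xs' <= 2)%N.
Proof.
move=> xs_count y; have [d_gt0 dl dr _] := step_d.
have count_lr : (count_mem y xs_lr <= count_mem y xs)%N.
  rewrite /xs_lr /xs_l; do 2 case: ifP => _; rewrite ?count_mem_rem ?leq_subr //.
  exact: leq_trans (leq_subr _ _) (leq_subr _ _).
rewrite /xs' /=.
have [/andP[ly yr] | y_out] := boolP (l < y < r).
  have y_xs : y \notin xs.
    by apply/negP => /xs_out [yl|ry]; [move: (lt_le_trans ly yl) | move: (lt_le_trans yr ry)]; rewrite ltxx.
  move: count_lr; rewrite (count_memPn y_xs) leqn0 => /eqP->.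
  by case: (_ == y); case: (_ == y).
have [ld|] := eqVneq (l + d) y.
  by move: y_out; rewrite -ld; have := lp; have := pr => ? ?; rewrite negb_and -!leNgt; lra.
have [rd|] := eqVneq (r - d) y.
  by move: y_out; rewrite -rd; have := lp; have := pr => ? ?; rewrite negb_and -!leNgt; lra.
by move=> _ _; exact: leq_trans count_lr (xs_count y).
Qed.

Lemma step_mult2_rep : (forall y, (count_mem y xs <= 2)%N) -> pwl alpha s xs beta = 0 ->
  mult2_rep alpha beta (G alpha beta p F).
Proof.
have b_in : alpha <= beta <= beta by rewrite lexx ltW.
move=> xs_count pwl_beta; exists s', xs'; split.
- exact: step_xs'_in.
- exact: step_xs'_count.
- by move=> z z_in; rewrite step_G // step_pwl // F_pwl.
- have [d_gt0 _ _ _] := step_d.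
  by rewrite step_pwl // pwl_beta tent_out ?(ltW d_gt0) ?step_tent_d ?add0r //; right.
Qed.

End GStep.

Section Mult2Rep.
Variables (R : realType) (alpha beta : R).
Hypothesis alpha_lt_beta : alpha < beta.

Lemma mult2_rep_zero : mult2_rep alpha beta (@zeroOmega R).
Proof.
by exists 0, [::]; split=> // [z _|]; rewrite /zeroOmega /pwl big_nil mul0r subr0.
Qed.

Lemma mult2_rep_G p F : alpha < p < beta ->
  mult2_rep alpha beta F -> mult2_rep alpha beta (G alpha beta p F).
Proof.
move=> p_in [s [xs [xs_in xs_count F_pwl pwl_beta]]].
have [p_in_xs|p_xs] := boolP (p \in xs).
  by rewrite /G (asboolF (pwl_not_derivable F_pwl xs_in p_in p_in_xs)); exists s, xs.
have [l [r [/andP[al lp] /andP[pr rb] l_xs r_xs xs_out]]] := neighbours p_in xs_in.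
have {}xs_out x : x \in xs -> x <= l \/ r <= x.
  move=> x_xs; case: (xs_out x x_xs) => [xl | xp | rx]; [by left | | by right].
  by move: p_xs; rewrite -xp x_xs.
exact: step_mult2_rep alpha_lt_beta F_pwl xs_in p_xs al lp pr rb l_xs r_xs xs_out xs_count pwl_beta.
Qed.

Lemma mult2_rep_foldl qs F : (forall q, q \in qs -> q \in `]alpha, beta[) ->
  mult2_rep alpha beta F -> mult2_rep alpha beta (foldl (fun F q => G alpha beta q F) F qs).
Proof.
elim: qs F => //= q qs IH F qs_in F_rep; apply: IH => [q' q'_in|].
  by apply: qs_in; rewrite inE q'_in orbT.
by apply: mult2_rep_G F_rep; have := qs_in q (mem_head _ _); rewrite in_itv.
Qed.

Lemma mult2_rep_trop_poly F : mult2_rep alpha beta F ->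
  trop_poly alpha beta F /\ (forall h, nonsmooth alpha beta F h -> multiplicity F h <= 2).
Proof.
move=> [s [xs [xs_in xs_count F_pwl pwl_beta]]].
have F_beta : F beta = 0 by rewrite F_pwl ?lexx ?ltW.
split; first split.
- exact: pwl_trop_series alpha_lt_beta F_pwl xs_in F_beta.
- exact: sub_finite_set (pwl_nonsmooth_sub F_pwl xs_in) (finite_seq xs).
- move=> h [h_in _]; rewrite in_itv /= in h_in.
  by rewrite (pwl_multiplicity F_pwl xs_in h_in) ler_nat.
Qed.

End Mult2Rep.

Theorem mainTheorem4 (R : realType) (alpha beta : R) (qs : seq R) :
  alpha < beta ->
  (forall q, q \in qs -> q \in `]alpha, beta[) ->
  let F := foldl (fun F q => G alpha beta q F) (@zeroOmega R) qs in
  trop_poly alpha beta F /\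
  (forall h, nonsmooth alpha beta F h -> multiplicity F h <= 2).
Proof.
move=> alpha_lt_beta qs_in F; apply: mult2_rep_trop_poly => //.
exact: mult2_rep_foldl qs_in (mult2_rep_zero alpha beta).
Qed.
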